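(* Let $\mathcal X\subseteq\mathbb R$ be an interval, $\omega\ge0$ a weight on $\mathcal X$, $Q(\phi)=\int_{\mathcal X}\phi(x)\omega(x)dx$, and $Q_N(\phi)=\sum_{i=0}^N\omega_{N,i}\phi(x_{N,i})$ with distinct nodes $x_{N,i}\in\mathcal X$ and real weights $\omega_{N,i}$. Assume $Q_N(\phi)=Q(\phi)$ for all $\phi\in P_{2N}$. Let $I_N$ be the interpolation operator onto $P_N$ at the nodes $x_{N,0},\dots,x_{N,N}$. Let $\phi_1,\phi_2$ be real continuous functions on $\mathcal X$ with $\phi_1,\phi_2\in L^2_\omega(\mathcal X)$ and $P_N\subset L^2_\omega(\mathcal X)$; set $\phi=\phi_1\phi_2$, $\psi_1=I_N\phi_1$, $\psi_2=I_N\phi_2$. Then $$|Q(\phi)-Q_N(\phi)|\le\bigl(\|\phi_1\|_\omega+\|\phi_2\|_\omega+\|\psi_1\|_\omega+\|\psi_2\|_\omega\bigr)\bigl(\|\phi_1-\psi_1\|_\omega+\|\phi_2-\psi_2\|_\omega\bigr).$$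
   Context: $P_K$ is the space of real polynomials of degree at most $K$; $\|f\|_\omega=(\int_{\mathcal X}|f|^2\omega)^{1/2}$. *)

From HB Require Import structures.
From mathcomp Require Import all_boot all_order all_algebra.
From mathcomp Require Import all_classical all_reals all_analysis.
Set Implicit Arguments. Unset Strict Implicit. Unset Printing Implicit Defensive.
Import Order.TTheory GRing.Theory Num.Theory.
Local Open Scope classical_set_scope.
Local Open Scope ring_scope.

Section Defs.
Variable R : realType.
Notation mu := (@lebesgue_measure R).

Definition L2w (X : set R) (w : R -> R) (f : R -> R) : Prop :=
  measurable_fun X f /\
  (\int[mu]_(x in X) ((f x) ^+ 2 * w x)%:E < +oo)%E.

Definition wnorm (X : set R) (w : R -> R) (f : R -> R) : R :=
  Num.sqrt (Rintegral mu X (fun x => `|f x| ^+ 2 * w x)).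

Definition Qint (X : set R) (w : R -> R) (f : R -> R) : R :=
  Rintegral mu X (fun x => f x * w x).

Definition QN (N : nat) (xs ws : 'I_N.+1 -> R) (f : R -> R) : R :=
  \sum_(i < N.+1) ws i * f (xs i).

Definition is_interp (N : nat) (xs : 'I_N.+1 -> R) (f : R -> R) (p : {poly R}) : Prop :=
  (size p <= N.+1)%N /\ forall i, p.[xs i] = f (xs i).
End Defs.

From HB Require Import structures.
From mathcomp Require Import all_boot all_order all_algebra.
From mathcomp Require Import all_classical all_reals all_analysis.
From mathcomp Require Import ring lra zify measurable_realfun.
Import Order.TTheory GRing.Theory Num.Theory.
Import numFieldNormedType.Exports.
Local Open Scope classical_set_scope.
Local Open Scope ring_scope.

(* Since psi1 psi2 has degree at most 2N and agrees with phi1 phi2 at the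
   nodes, Q_N(phi1 phi2) = Q_N(psi1 psi2) = Q(psi1 psi2).  The error is then
   Q(phi1 (phi2 - psi2)) + Q((phi1 - psi1) psi2), and each term is bounded by
   the Cauchy-Schwarz inequality in L^2_omega. *)

(* Evaluate at the minimiser t = -C/B; if B = 0 the quadratic is affine in t,
   so nonnegativity forces C = 0. *)
Lemma ler_norm_sqrt_quadratic (R : rcfType) (A B C : R) : 0 <= A -> 0 <= B ->
  (forall t, 0 <= A + 2 * t * C + t ^+ 2 * B) ->
  `|C| <= Num.sqrt A * Num.sqrt B.
Proof.
move=> A0 B0 H.
suff CAB : C ^+ 2 <= A * B.
  by rewrite -sqrtrM // -sqrtr_sqr ler_sqrt ?mulr_ge0.
have [B_eq0|B_neq0] := eqVneq B 0.
  have [->|C_neq0] := eqVneq C 0; first by rewrite B_eq0; lra.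
  have := H (- (A + 1) / (2 * C)); rewrite B_eq0 mulr0 addr0.
  have -> : 2 * (- (A + 1) / (2 * C)) * C = - (A + 1) by field.
  lra.
have := H (- C / B); rewrite expr2.
have -> : - C / B * (- C / B) * B = C * C / B by field.
have -> : 2 * (- C / B) * C = - 2 * (C * C / B) by field.
move=> h; have : 0 <= (A - C * C / B) * B by apply: mulr_ge0; lra.
by rewrite mulrBl mulfVK // expr2; lra.
Qed.

Section WeightedL2.
Variable R : realType.
Notation mu := (@lebesgue_measure R).
Variables (X : set R) (w : R -> R).
Hypothesis mX : measurable (X : set (measurableTypeR R)).
Hypothesis mw : measurable_fun X w.
Hypothesis w_ge0 : forall x, X x -> 0 <= w x.

Definition Rintegrable (f : R -> R) := mu.-integrable X (EFin \o f).

Lemma Rintegrable_scale (k : R) {h : R -> R} :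
  Rintegrable h -> Rintegrable (fun x => k * h x).
Proof.
move=> ih; have := integrableZl mX k ih.
by apply: eq_integrable => // x _ /=; rewrite EFinM.
Qed.

Lemma Rintegrable_add {f g : R -> R} :
  Rintegrable f -> Rintegrable g -> Rintegrable (fun x => f x + g x).
Proof.
move=> i1 i2; have := integrableD mX i1 i2.
by apply: eq_integrable => // x _ /=; rewrite EFinD.
Qed.

Lemma sqr_weight_ge0 (f : R -> R) x : X x -> 0 <= f x ^+ 2 * w x.
Proof. by move=> Xx; rewrite mulr_ge0 ?sqr_ge0 ?w_ge0. Qed.

Lemma L2wP (f : R -> R) :
  L2w X w f <-> measurable_fun X f /\ Rintegrable (fun x => f x ^+ 2 * w x).
Proof.
have abs_int : (\int[mu]_(x in X) `|(f x ^+ 2 * w x)%:E| =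
                \int[mu]_(x in X) (f x ^+ 2 * w x)%:E)%E.
  by apply: eq_integral => x /[!inE] Xx; rewrite gee0_abs ?lee_fin ?sqr_weight_ge0.
split=> [[mf fin]|[mf /integrableP[_]]]; last by rewrite abs_int.
split=> //; apply/integrableP; split; last by rewrite abs_int.
apply/measurable_EFinP; apply: measurable_funM => //; exact: measurable_funX.
Qed.

Lemma L2w_mul_Rintegrable {f g : R -> R} :
  L2w X w f -> L2w X w g -> Rintegrable (fun x => f x * g x * w x).
Proof.
move=> /L2wP[mf if2] /L2wP[mg ig2].
have := Rintegrable_add if2 ig2; apply: le_integrable => //.
  by apply/measurable_EFinP; do 2 apply: measurable_funM => //.
move=> x Xx /=; rewrite lee_fin -mulrDl !normrM ler_wpM2r //.
rewrite (ger0_norm (addr_ge0 (sqr_ge0 _) (sqr_ge0 _))).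
rewrite -(real_normK (num_real (f x))) -(real_normK (num_real (g x))).
by have := sqr_ge0 (`|f x| - `|g x|); nra.
Qed.

Lemma L2wB {f g : R -> R} :
  L2w X w f -> L2w X w g -> L2w X w (fun x => f x - g x).
Proof.
move=> hf hg; have fg := L2w_mul_Rintegrable hf hg.
move: hf hg => /L2wP[mf if2] /L2wP[mg ig2].
apply/L2wP; split; first exact: measurable_funB.
have := Rintegrable_add (Rintegrable_add if2 (Rintegrable_scale (-2) fg)) ig2.
by apply: eq_integrable => // x _ /=; congr EFin; ring.
Qed.

Lemma wnorm_ge0 (f : R -> R) : 0 <= wnorm X w f.
Proof. exact: sqrtr_ge0. Qed.

Lemma wnorm_CauchySchwarz {f g : R -> R} : L2w X w f -> L2w X w g ->
  `| Rintegral mu X (fun x => f x * g x * w x) | <= wnorm X w f * wnorm X w g.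
Proof.
move=> hf hg; have fg := L2w_mul_Rintegrable hf hg.
move: hf hg => /L2wP[_ if2] /L2wP[_ ig2].
have wnormE h : wnorm X w h = Num.sqrt (Rintegral mu X (fun x => h x ^+ 2 * w x)).
  by congr Num.sqrt; apply: eq_Rintegral => x _; rewrite real_normK ?num_real.
rewrite !wnormE; apply: ler_norm_sqrt_quadratic => [||t].
- by apply: Rintegral_ge0 => x; apply: sqr_weight_ge0.
- by apply: Rintegral_ge0 => x; apply: sqr_weight_ge0.
have := @Rintegral_ge0 _ _ _ mu X (fun x => (f x + t * g x) ^+ 2 * w x).
have -> : Rintegral mu X (fun x => (f x + t * g x) ^+ 2 * w x) =
    Rintegral mu X (fun x => f x ^+ 2 * w x + (2 * t) * (f x * g x * w x)
                             + t ^+ 2 * (g x ^+ 2 * w x)).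
  by apply: eq_Rintegral => x _; ring.
have ifg := Rintegrable_scale (2 * t) fg.
have ig2t := Rintegrable_scale (t ^+ 2) ig2.
rewrite RintegralD //; last exact: Rintegrable_add.
rewrite RintegralD // !RintegralZl //.
by apply=> x; apply: (sqr_weight_ge0 (fun y => f y + t * g y)).
Qed.

Lemma Rintegral_mul_perturbation {f1 f2 g1 g2 : R -> R} :
  L2w X w f1 -> L2w X w f2 -> L2w X w g1 -> L2w X w g2 ->
  `| Rintegral mu X (fun x => f1 x * f2 x * w x)
     - Rintegral mu X (fun x => g1 x * g2 x * w x) |
  <= (wnorm X w f1 + wnorm X w f2 + wnorm X w g1 + wnorm X w g2)
   * (wnorm X w (fun x => f1 x - g1 x) + wnorm X w (fun x => f2 x - g2 x)).
Proof.
move=> h1 h2 k1 k2; have d1 := L2wB h1 k1; have d2 := L2wB h2 k2.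
have -> : Rintegral mu X (fun x => f1 x * f2 x * w x)
          - Rintegral mu X (fun x => g1 x * g2 x * w x) =
    Rintegral mu X (fun x => f1 x * (f2 x - g2 x) * w x)
    + Rintegral mu X (fun x => (f1 x - g1 x) * g2 x * w x).
  rewrite -RintegralD //; try exact: L2w_mul_Rintegrable.
  rewrite -RintegralB //; try exact: L2w_mul_Rintegrable.
  by apply: eq_Rintegral => x _; ring.
apply: le_trans (ler_normD _ _) _.
have c1 := wnorm_CauchySchwarz h1 d2; have c2 := wnorm_CauchySchwarz d1 k2.
have := wnorm_ge0 f1; have := wnorm_ge0 f2; have := wnorm_ge0 g1.
have := wnorm_ge0 g2; have := wnorm_ge0 (fun x => f1 x - g1 x).
have := wnorm_ge0 (fun x => f2 x - g2 x).
nra.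
Qed.

End WeightedL2.

Lemma size_polyM_le_double (R : nzRingType) (N : nat) (p q : {poly R}) :
  (size p <= N.+1)%N -> (size q <= N.+1)%N -> (size (p * q)%R <= (2 * N).+1)%N.
Proof.
by move=> sp sq; apply: leq_trans (size_polyMleq p q) _; lia.
Qed.

Theorem mainTheorem11 (R : realType) (X : set R) (w : R -> R) (N : nat)
  (xs ws : 'I_N.+1 -> R) (phi1 phi2 : R -> R) (psi1 psi2 : {poly R}) :
  is_interval X ->
  measurable_fun X w -> (forall x, X x -> 0 <= w x) ->
  injective xs -> (forall i, X (xs i)) ->
  (forall p : {poly R}, (size p <= (2 * N).+1)%N ->
     QN xs ws (fun x => p.[x]) = Qint X w (fun x => p.[x])) ->
  {within X, continuous phi1} -> {within X, continuous (phi2 : R -> R)} ->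
  L2w X w phi1 -> L2w X w phi2 ->
  (forall p : {poly R}, (size p <= N.+1)%N -> L2w X w (fun x => p.[x])) ->
  is_interp xs phi1 psi1 -> is_interp xs phi2 psi2 ->
  `| Qint X w (fun x => phi1 x * phi2 x) - QN xs ws (fun x => phi1 x * phi2 x) |
  <= (wnorm X w phi1 + wnorm X w phi2
      + wnorm X w (fun x => psi1.[x]) + wnorm X w (fun x => psi2.[x]))
   * (wnorm X w (fun x => phi1 x - psi1.[x]) + wnorm X w (fun x => phi2 x - psi2.[x])).
Proof.
move=> iX mw w_ge0 _ _ exact2N _ _ h1 h2 hP [s1 i1] [s2 i2].
have QN_interp : QN xs ws (fun x => phi1 x * phi2 x) =
                 QN xs ws (fun x => (psi1 * psi2).[x]).
  by apply: eq_bigr => i _; rewrite hornerM i1 i2.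
have Q_interp : Qint X w (fun x => (psi1 * psi2).[x]) =
    Rintegral lebesgue_measure X (fun x => psi1.[x] * psi2.[x] * w x).
  by apply: eq_Rintegral => x _; rewrite hornerM.
rewrite QN_interp exact2N ?size_polyM_le_double // Q_interp /Qint.
exact: (Rintegral_mul_perturbation _ _ _ (is_interval_measurable iX) mw w_ge0
  h1 h2 (hP _ s1) (hP _ s2)).
Qed.
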